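(* Let $\mathcal{X}$ be a set, $p\ge2$, $\Theta$ a parameter set, and for each $\theta\in\Theta$ let $s^\theta:\mathcal{X}\to\mathbb{R}^p$ be a score map with predictor $h_\theta$ and pairwise reduction $g_\theta$. Let $\mathcal{H}_\Theta=\{h_\theta:\theta\in\Theta\}$ and $\mathcal{G}_\Theta=\{g_\theta:\theta\in\Theta\}$. If a set $S=\{x^{(1)},\dots,x^{(n)}\}\subseteq\mathcal{X}$ of $n$ distinct points is Natarajan-shattered by $\mathcal{H}_\Theta$, then \[ 2^n\ \le\ \Pi_{\mathcal{G}_\Theta}\big(n\,p(p-1)/2\big). \]
   Context: Labels are $[p]=\{1,\dots,p\}$. The predictor is $h_\theta(x)=\ell$ if $s^\theta_\ell(x)>s^\theta_k(x)$ for all $k\ne\ell$, and $h_\theta(x)=\bot$ otherwise ($\bot\notin[p]$). The pairwise reduction is defined on $\mathcal{Z}_{\mathrm{pair}}=\mathcal{X}\times\{(i,j)\in[p]^2:i<j\}$ by $g_\theta(x,i,j)=+1$ if $s^\theta_i(x)\ge s^\theta_j(x)$ and $-1$ otherwise. A finite $S\subseteq\mathcal{X}$ is Natarajan-shattered by a class $\mathcal{H}$ of functions $\mathcal{X}\to[p]\cup\{\bot\}$ if there exist $f_1,f_2:S\to[p]$ with $f_1(x)\ne f_2(x)$ for all $x\in S$ such that for every $b\in\{1,2\}^S$ some $h\in\mathcal{H}$ satisfies $h(x)=f_{b(x)}(x)$ for all $x\in S$. For a class $\mathcal{B}\subseteq\{-1,+1\}^{\mathcal{Z}}$, the growth function is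 $\Pi_{\mathcal{B}}(N)=\max\{|\{b|_T:b\in\mathcal{B}\}|:\ T\subseteq\mathcal{Z},|T|=N\}$. *)

From HB Require Import structures.
From mathcomp Require Import all_boot all_order all_algebra.
From mathcomp Require Import boolp reals.
Set Implicit Arguments. Unset Strict Implicit. Unset Printing Implicit Defensive.
Import Order.TTheory GRing.Theory Num.Theory.
Local Open Scope ring_scope.

(* Labels [p] = 'I_p ; the abstention symbol \bot is None. *)

Definition predictor (R : realType) (X : Type) (p : nat)
    (s : X -> 'I_p -> R) (x : X) : option 'I_p :=
  [pick l : 'I_p | [forall k : 'I_p, (k != l) ==> (s x k < s x l)]].

Definition pairs (p : nat) : Type := {ij : 'I_p * 'I_p | (ij.1 < ij.2)%N}.

Definition Zpair (X : Type) (p : nat) : Type := (X * pairs p)%type.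

(* pairwise reduction g_theta(x,i,j) = +1 iff s_i(x) >= s_j(x);
   +1 is encoded as true, -1 as false. *)
Definition pairwise_red (R : realType) (X : Type) (p : nat)
    (s : X -> 'I_p -> R) (z : Zpair X p) : bool :=
  s z.1 (sval z.2).1 >= s z.1 (sval z.2).2.

(* Functions f1,f2 : S -> [p]
   are represented through the (bijective) indexing 'I_n -> S. *)
Definition Natarajan_shattered (X : Type) (p n : nat)
    (H : (X -> option 'I_p) -> Prop) (x : 'I_n -> X) : Prop :=
  exists f1 f2 : 'I_n -> 'I_p,
    (forall k, f1 k != f2 k) /\
    forall b : 'I_n -> bool, exists h, H h /\
      forall k, h (x k) = Some (if b k then f1 k else f2 k).

Definition npatterns (Z : Type) (B : (Z -> bool) -> Prop) (N : nat)
    (T : 'I_N -> Z) : nat :=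
  #|[set f : {ffun 'I_N -> bool} |
      `[< exists b, B b /\ forall i, f i = b (T i) >] ]|.

(* Growth function: max over subsets T of Z with |T| = N of npatterns.
   (The number of patterns is always <= 2^N, so the max ranges over k <= 2^N.) *)
Definition growth (Z : Type) (B : (Z -> bool) -> Prop) (N : nat) : nat :=
  (\max_(k < (2 ^ N).+1 |
      `[< exists T : 'I_N -> Z, injective T /\ npatterns B T = k >]) k)%N.

From mathcomp Require Import all_boot all_order all_algebra.
From mathcomp Require Import boolp reals.
Set Implicit Arguments.
Unset Strict Implicit.
Unset Printing Implicit Defensive.
Import Order.TTheory.

(* If h_th(x) = a and h_th'(x) = a' with a <> a', then g_th and g_th' disagree
   at (x, min(a,a'), max(a,a')): the pairwise reduction pins down every
   non-abstaining prediction.  Hence the 2^n parameters witnessing the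
   Natarajan shattering of S give 2^n distinct patterns of G_Theta on the
   n p(p-1)/2 points (x, i, j) with x in S and i < j. *)

Lemma card_ltn_pairs p : #|[pred ij : 'I_p * 'I_p | ij.1 < ij.2]| = 'C(p, 2).
Proof.
rewrite -bin2_sum big_mkord -sum1_card.
rewrite (eq_bigl (fun ij : 'I_p * 'I_p => true && (ij.1 < ij.2))) //.
rewrite -(pair_big_dep xpredT (fun i j : 'I_p => i < j) (fun _ _ => 1)) /=.
rewrite (exchange_big_dep xpredT) //=; apply: eq_bigr => j _.
rewrite -(big_ord_widen _ (fun _ => 1) (ltnW (ltn_ord j))).
by rewrite sum1_card card_ord.
Qed.

Lemma card_pairs p : #|{: pairs p}| = 'C(p, 2).
Proof. by rewrite card_sig card_ltn_pairs. Qed.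

Lemma muln_bin2 n p : n * p * (p - 1) %/ 2 = n * 'C(p, 2).
Proof.
have bin2_twice : 'C(p, 2) * 2 = p * (p - 1).
  by rewrite mulnC mul_bin_left bin1 mulnC.
by rewrite -mulnA -bin2_twice mulnA mulnK.
Qed.

Section Patterns.

Variables (Z : Type) (B : (Z -> bool) -> Prop).

Definition patterns (D : finType) (T : D -> Z) : {set {ffun D -> bool}} :=
  [set f : {ffun D -> bool} | `[< exists b, B b /\ forall d, f d = b (T d) >] ].

Lemma npatterns_le_growth N (T : 'I_N -> Z) :
  injective T -> npatterns B T <= growth B N.
Proof.
move=> T_inj; have lt_npat : npatterns B T < (2 ^ N).+1.
  by rewrite ltnS (leq_trans (max_card _)) // card_ffun card_bool card_ord.
apply: (@leq_bigmax_cond _ _ (fun k : 'I_(2 ^ N).+1 => val k) (Ordinal lt_npat)).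
by apply/asboolP; exists T.
Qed.

Lemma card_patterns_le_growth (D : finType) (T : D -> Z) :
  injective T -> #|patterns T| <= growth B #|D|.
Proof.
move=> T_inj.
apply: leq_trans (npatterns_le_growth (inj_comp T_inj enum_val_inj)).
pose reindex (f : {ffun D -> bool}) := [ffun i : 'I_#|D| => f (enum_val i)].
have reindex_inj : injective reindex.
  move=> f g /ffunP fg; apply/ffunP => d.
  by have := fg (enum_rank d); rewrite !ffunE enum_rankK.
rewrite -(card_imset _ reindex_inj); apply: subset_leq_card.
apply/subsetP => _ /imsetP [f + ->]; rewrite !inE => /asboolP [b [Bb fb]].
by apply/asboolP; exists b; split=> // i; rewrite ffunE fb.
Qed.

End Patterns.

Lemma predictor_eq_of_pairwise_red (R : realType) (X : Type) (p : nat)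
    (s1 s2 : X -> 'I_p -> R) y a1 a2 :
  (forall ij, pairwise_red s1 (y, ij) = pairwise_red s2 (y, ij)) ->
  predictor s1 y = Some a1 -> predictor s2 y = Some a2 -> a1 = a2.
Proof.
have argmax (s : X -> 'I_p -> R) a m :
    predictor s y = Some a -> m != a -> (s y m < s y a)%R.
  rewrite /predictor; case: pickP => // a' /forallP max_a' [<-].
  exact: implyP (max_a' m).
wlog lt12 : s1 s2 a1 a2 / (a1 < a2)%N => [sym red12 h1 h2|red12 h1 h2].
  case: (ltngtP a1 a2) => [lt12|lt21|/val_inj //]; first exact: sym.
  by apply/esym/(sym s2 s1) => // ij; rewrite red12.
have := red12 (exist _ (a1, a2) lt12); rewrite /pairwise_red /=.
have ne12 : a2 != a1 by rewrite neq_ltn lt12 orbT.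
rewrite (ltW (argmax _ _ _ h1 ne12)) leNgt (argmax _ _ _ h2 _) //.
by rewrite eq_sym.
Qed.

Definition grid (X : Type) (p n : nat) (x : 'I_n -> X) (d : 'I_n * pairs p) :
  Zpair X p := (x d.1, d.2).

Lemma grid_inj (X : Type) (p n : nat) (x : 'I_n -> X) :
  injective x -> injective (@grid X p n x).
Proof. by move=> x_inj [k ij] [k' ij'] [/x_inj -> ->]. Qed.

Lemma shattered_card_pairwise_patterns (R : realType) (X : Type) (p : nat)
    (Theta : Type) (s : Theta -> X -> 'I_p -> R) (n : nat) (x : 'I_n -> X) :
  Natarajan_shattered (fun h => exists th : Theta, h = predictor (s th)) x ->
  2 ^ n <= #|patterns (fun g => exists th : Theta, g = pairwise_red (s th))
                      (grid x)|.
Proof.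
move=> [f1 [f2 [f12 shattering]]].
have /choice [th th_pred] : forall b : {ffun 'I_n -> bool}, exists th, forall k,
    predictor (s th) (x k) = Some (if b k then f1 k else f2 k).
  by move=> b; have [_ [[th ->] ?]] := shattering b; exists th.
pose pattern b := [ffun d => pairwise_red (s (th b)) (grid x d)].
have pattern_inj : injective pattern.
  move=> b1 b2 /ffunP same; apply/ffunP => k.
  have red12 ij :
      pairwise_red (s (th b1)) (x k, ij) = pairwise_red (s (th b2)) (x k, ij).
    by have := same (k, ij); rewrite !ffunE.
  have := predictor_eq_of_pairwise_red red12 (th_pred b1 k) (th_pred b2 k).
  by case: (b1 k) (b2 k) (f12 k) => [] [] // /eqP f12k eq12; case: f12k.
rewrite -[2]card_bool -[n in _ ^ n]card_ord -card_ffun.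
rewrite -(card_imset _ pattern_inj).
apply: subset_leq_card; apply/subsetP => _ /imsetP [b _ ->]; rewrite inE.
apply/asboolP; exists (pairwise_red (s (th b))).
by split=> [|d]; [exists (th b)|rewrite ffunE].
Qed.

Theorem mainTheorem15 (R : realType) (X : Type) (p : nat) (Theta : Type)
    (s : Theta -> X -> 'I_p -> R) (n : nat) (x : 'I_n -> X) :
  (2 <= p)%N ->
  injective x ->
  Natarajan_shattered (fun h => exists th : Theta, h = predictor (s th)) x ->
  (2 ^ n <= growth (fun g => exists th : Theta, g = pairwise_red (s th))
                   (n * p * (p - 1) %/ 2))%N.
Proof.
move=> _ x_inj shattered.
rewrite muln_bin2 -card_pairs -[n in n * _]card_ord -card_prod.
apply: leq_trans (shattered_card_pairwise_patterns shattered) _.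
exact: card_patterns_le_growth (grid_inj x_inj).
Qed.
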